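(* Let $S$ be a $0$-left cancellative semigroup admitting least common multiples. Then for every open maximal string $\sigma$ in $S$, the map $\varphi_\sigma$ is an ultracharacter of $\mathfrak E(S)$.
   Context: $S$ has zero $0$, $S'=S\setminus\{0\}$; $0$-left cancellative: $st=sr\ne0\Rightarrow t=r$. $\tilde S=S\cup\{1\}$ ($1$ an adjoined identity); $s\mid t$ iff $t\in s\tilde S$; $r$ is a least common multiple of $s,t$ if $sS\cap tS=rS$, $s\mid r$, $t\mid r$; every pair has one. For $s\in S$: $F_s=\{x\in S':sx\ne0\}$, $E_s=sS\setminus\{0\}$, $\theta_s:F_s\to E_s$, $x\mapsto sx$. $\mathcal H(S)$ is the inverse semigroup of partial bijections of $S'$ generated by the $\theta_s$, and $\mathfrak E(S)=\{X\subseteq S':\mathrm{id}_X\in\mathcal H(S)\}$, a semilattice under $\cap$ with zero $\emptyset$. A string is a nonempty $\sigma\subseteq S$ with $0\notin\sigma$, closed under divisors, with any two elements having a common multiple in $\sigma$; maximal: not properly contained in another string; open: $\sigma=\{s\in S:\exists p\in S,\ sp\in\sigma\}$. For a string $\sigma$ and $X\in\mathfrak E(S)$ put $\varphi_\sigma(X)=1$ if for every $s\in\sigma$ there is $t\in\sigma\cap X$ with $s\mid t$, and $\varphi_\sigma(X)=0$ otherwise. A character of $\mathfrak E(S)$ is a nonzero map $\varphi:\mathfrak E(S)\to\{0,1\}$ with $\varphi(\emptyset)=0$ and $\varphi(X\cap Y)=\varphi(X)\varphi(Y)$; it is an ultracharacter if for every character $\psi$, $\varphi\le\psi$ pointwise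 implies $\varphi=\psi$. *)

(* semigroups with zero given by explicit carrier and operations.
   Subsets of S are predicates S -> Prop; the two-element set {0,1} is modelled by Prop. *)
Set Implicit Arguments.

Section Defs.
Variables (S : Type) (mul : S -> S -> S) (zero : S).

Definition divides (s t : S) : Prop := t = s \/ exists u, t = mul s u.

Definition zero_left_cancellative : Prop :=
  forall s t r, mul s t = mul s r -> mul s t <> zero -> t = r.

Definition is_lcm (s t r : S) : Prop :=
  (forall x, ((exists a, x = mul s a) /\ (exists b, x = mul t b)) <-> exists c, x = mul r c)
  /\ divides s r /\ divides t r.

Definition admits_lcm : Prop := forall s t, exists r, is_lcm s t r.

(* partial maps on S' represented by their graphs *)
Definition prel := S -> S -> Prop.

Definition theta (s : S) : prel := fun x y => x <> zero /\ mul s x <> zero /\ y = mul s x.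

(* words in the generators of the inverse semigroup H(S) *)
Inductive hword : Type :=
| HGen : S -> hword
| HComp : hword -> hword -> hword
| HInv : hword -> hword.

(* HComp w1 w2 = w1 o w2 (first apply w2, then w1) *)
Fixpoint hrel (w : hword) : prel :=
  match w with
  | HGen s => theta s
  | HComp w1 w2 => fun x z => exists y, hrel w2 x y /\ hrel w1 y z
  | HInv w1 => fun x y => hrel w1 y x
  end.

Definition inH (f : prel) : Prop :=
  exists w, forall x y, hrel w x y <-> f x y.

Definition idmap (X : S -> Prop) : prel := fun x y => x = y /\ X x.

Definition inE (X : S -> Prop) : Prop :=
  (forall x, X x -> x <> zero) /\ inH (idmap X).

Definition emptyset : S -> Prop := fun _ => False.
Definition inter (X Y : S -> Prop) : S -> Prop := fun x => X x /\ Y x.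

Definition character (phi : (S -> Prop) -> Prop) : Prop :=
  (forall X Y, inE X -> inE Y -> (forall x, X x <-> Y x) -> (phi X <-> phi Y)) /\
  (exists X, inE X /\ phi X) /\
  ~ phi emptyset /\
  (forall X Y, inE X -> inE Y -> (phi (inter X Y) <-> phi X /\ phi Y)).

Definition ultracharacter (phi : (S -> Prop) -> Prop) : Prop :=
  character phi /\
  forall psi, character psi ->
    (forall X, inE X -> phi X -> psi X) ->
    forall X, inE X -> (phi X <-> psi X).

Definition is_string (sigma : S -> Prop) : Prop :=
  (exists s, sigma s) /\
  ~ sigma zero /\
  (forall s t, sigma t -> divides s t -> sigma s) /\
  (forall s t, sigma s -> sigma t -> exists r, sigma r /\ divides s r /\ divides t r).

Definition maximal_string (sigma : S -> Prop) : Prop :=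
  is_string sigma /\
  forall tau, is_string tau -> (forall s, sigma s -> tau s) -> forall s, tau s -> sigma s.

Definition open_string (sigma : S -> Prop) : Prop :=
  forall s, sigma s <-> exists p, sigma (mul s p).

Definition phi_sigma (sigma : S -> Prop) (X : S -> Prop) : Prop :=
  forall s, sigma s -> exists t, sigma t /\ X t /\ divides s t.

End Defs.

From Stdlib Require Import Classical.

(* By the lcm property, every partial bijection in H(S) has the form [u y |-> v y] for [y]
   ranging over a set [D] closed under right factors, with [u], [v] in S u {1}.  Hence each
   X in E(S) is [uD], so it is convex for divisibility, and this convexity makes phi_sigma
   multiplicative.  If a character psi dominates phi_sigma, the r with psi(E_r) = 1 form a
   string containing sigma, hence equal to it by maximality.  For X = uD with psi(X) = 1 and
   s in sigma, openness yields t = uk in sigma with s | t; since psi(X n E_t) = 1, X meets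
   E_t, and left cancellation turns this into k in D, i.e. t in X. *)

Section ZeroLeftCancellative.

Variables (S : Type) (mul : S -> S -> S) (zero : S).
Hypothesis mulA : forall a b c, mul a (mul b c) = mul (mul a b) c.
Hypothesis mul0s : forall a, mul zero a = zero.
Hypothesis muls0 : forall a, mul a zero = zero.
Hypothesis cancel : zero_left_cancellative mul zero.
Hypothesis lcm : admits_lcm mul.

Lemma mul_neq0l y f : mul y f <> zero -> y <> zero.
Proof. intros H ->. apply H, mul0s. Qed.

Lemma mul_neq0r s y : mul s y <> zero -> y <> zero.
Proof. intros H ->. apply H, muls0. Qed.

Lemma divides_mulr a p : divides mul a (mul a p).
Proof. right; eauto. Qed.

Lemma divides_trans a b c : divides mul a b -> divides mul b c -> divides mul a c.
Proof.
  intros [-> | [e ->]] [-> | [f ->]].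
  - left; reflexivity.
  - apply divides_mulr.
  - apply divides_mulr.
  - rewrite <- mulA; apply divides_mulr.
Qed.

(* Elements of S u {1}, the adjoined identity being [None], acting on S on the left. *)
Definition tmul (u : option S) (y : S) : S :=
  match u with None => y | Some a => mul a y end.

Definition tcomp (c a : option S) : option S :=
  match c, a with
  | None, _ => a
  | Some c, None => Some c
  | Some c, Some a => Some (mul c a)
  end.

Lemma tmul_comp c a y : tmul (tcomp c a) y = tmul c (tmul a y).
Proof. destruct c, a; simpl; auto. Qed.

Lemma tmul_mulr u y f : tmul u (mul y f) = mul (tmul u y) f.
Proof. destruct u; simpl; auto. Qed.

Lemma tmul_inj u y y' : tmul u y = tmul u y' -> tmul u y <> zero -> y = y'.
Proof. destruct u as [s |]; simpl; auto. apply (cancel s). Qed.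

Lemma divides_tmul a r : divides mul a r -> exists k, forall c, mul a (tmul k c) = mul r c.
Proof. intros [-> | [k ->]]; [exists None | exists (Some k)]; simpl; auto. Qed.

(* [a] and [b] are the cofactors of a least common multiple [p a = q b] in S u {1}. *)
Lemma tmul_lcm (p q : option S) :
  exists a b, (forall c, tmul p (tmul a c) = tmul q (tmul b c)) /\
    (forall y z, tmul p y = tmul q z -> tmul p y <> zero ->
       exists c, y = tmul a c /\ z = tmul b c).
Proof.
  destruct p as [p |]; [destruct q as [q |] |].
  - destruct (lcm p q) as [r [Hr [Dp Dq]]].
    destruct (divides_tmul _ _ Dp) as [a Ha]; destruct (divides_tmul _ _ Dq) as [b Hb].
    exists a, b; split; simpl.
    + intros c; rewrite Ha, Hb; reflexivity.
    + intros y z E NZ.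
      destruct (proj1 (Hr (mul p y))) as [c Ec]; [split; eauto |].
      exists c; split; [apply (cancel p) | apply (cancel q)].
      * rewrite Ha; exact Ec.
      * exact NZ.
      * rewrite Hb, <- E; exact Ec.
      * rewrite <- E; exact NZ.
  - exists None, (Some p); split; [reflexivity |].
    simpl; intros y z E _; exists y; auto.
  - exists q, None; split; [reflexivity |].
    simpl; intros y z E _; exists z; auto.
Qed.

Definition rclosed (D : S -> Prop) : Prop := forall y f, D (mul y f) -> D y.

Definition nf (u v : option S) (D : S -> Prop) : prel S :=
  fun x z => exists y, D y /\ x = tmul u y /\ z = tmul v y.

Definition nf_wf (u v : option S) (D : S -> Prop) : Prop :=
  rclosed D /\ forall y, D y -> tmul u y <> zero /\ tmul v y <> zero.

Lemma nf_theta s :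
  nf_wf None (Some s) (fun y => mul s y <> zero) /\
  forall x z, theta mul zero s x z <-> nf None (Some s) (fun y => mul s y <> zero) x z.
Proof.
  split; [split |].
  - intros y f; rewrite mulA; apply mul_neq0l.
  - simpl; eauto using mul_neq0r.
  - unfold theta, nf; simpl; split.
    + intros [_ [H ->]]; eauto.
    + intros [y [H [-> ->]]]; eauto using mul_neq0r.
Qed.

Lemma nf_inv u v D :
  nf_wf u v D -> nf_wf v u D /\ forall x z, nf u v D z x <-> nf v u D x z.
Proof.
  intros [HD Hn]; split; [split; [exact HD | firstorder] |].
  unfold nf; firstorder.
Qed.

Lemma nf_comp u1 v1 D1 u2 v2 D2 :
  nf_wf u1 v1 D1 -> nf_wf u2 v2 D2 ->
  exists u v D, nf_wf u v D /\
    forall x z, (exists y, nf u2 v2 D2 x y /\ nf u1 v1 D1 y z) <-> nf u v D x z.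
Proof.
  intros [HD1 Hn1] [HD2 Hn2].
  destruct (tmul_lcm v2 u1) as [a [b [Eab Hab]]].
  exists (tcomp u2 a), (tcomp v1 b), (fun c => D2 (tmul a c) /\ D1 (tmul b c)).
  split; [split |].
  - intros c f; rewrite !tmul_mulr; intros [H2 H1]; eauto.
  - intros c [H2 H1]; rewrite !tmul_comp; split; [apply Hn2 | apply Hn1]; auto.
  - intros x z; split.
    + intros [y [[y2 [H2 [-> ->]]] [y1 [H1 [E ->]]]]].
      destruct (Hab y2 y1) as [c [-> ->]]; [exact E | apply Hn2, H2 |].
      exists c; rewrite !tmul_comp; auto.
    + intros [c [[H2 H1] [-> ->]]]; rewrite !tmul_comp.
      exists (tmul v2 (tmul a c)); split.
      * exists (tmul a c); auto.
      * exists (tmul b c); auto.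
Qed.

Lemma hrel_nf w : exists u v D, nf_wf u v D /\ forall x z, hrel mul zero w x z <-> nf u v D x z.
Proof.
  induction w as [s | w1 [u1 [v1 [D1 [W1 H1]]]] w2 [u2 [v2 [D2 [W2 H2]]]] |
                  w [u [v [D [W H]]]]]; simpl.
  - destruct (nf_theta s) as [W H]; eauto.
  - destruct (nf_comp _ _ _ _ _ _ W1 W2) as [u [v [D [W H]]]].
    exists u, v, D; split; [exact W |].
    intros x z; rewrite <- H; split; intros [y Hy]; exists y; rewrite H1, H2 in *; tauto.
  - destruct (nf_inv _ _ _ W) as [W' H']; exists v, u, D; split; [exact W' |].
    intros x z; rewrite H, H'; tauto.
Qed.

Lemma inE_nf X :
  inE mul zero X ->
  exists u D, rclosed D /\ (forall y, D y -> tmul u y <> zero) /\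
    forall x, X x <-> exists y, D y /\ x = tmul u y.
Proof.
  intros [_ [w Hw]].
  destruct (hrel_nf w) as [u [v [D [[HD Hn] H]]]].
  exists u, D; split; [exact HD | split; [firstorder |]].
  intros x; split.
  - intros Hx; destruct (proj1 (H x x) (proj2 (Hw x x) (conj eq_refl Hx))) as [y [Dy [Ex _]]].
    eauto.
  - intros [y [Dy ->]].
    assert (Hi : idmap X (tmul u y) (tmul v y)) by (apply Hw, H; exists y; auto).
    exact (proj2 Hi).
Qed.

Lemma inE_convex X a b c :
  inE mul zero X -> X a -> X c -> divides mul a b -> divides mul b c -> X b.
Proof.
  intros HX Xa Xc [-> | [e ->]] [-> | [f ->]]; auto.
  destruct (inE_nf _ HX) as [u [D [HD [Hn HXD]]]].
  apply HXD in Xa as [y0 [D0 ->]]; apply HXD in Xc as [y1 [D1 E1]].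
  apply HXD; exists (mul y0 e); split; [| symmetry; apply tmul_mulr].
  rewrite <- !tmul_mulr in E1.
  apply tmul_inj in E1; [| rewrite E1; auto].
  apply (HD _ f); rewrite E1; exact D1.
Qed.

Definition principal (t : S) : S -> Prop := fun x => exists y, mul t y <> zero /\ x = mul t y.

Lemma inE_principal t : inE mul zero (principal t).
Proof.
  split.
  - intros x [y [H ->]]; exact H.
  - exists (HComp (HGen t) (HInv (HGen t))); intros x z; simpl; unfold theta, idmap, principal.
    split.
    + intros [y [[_ [H ->]] [_ [_ ->]]]]; eauto.
    + intros [-> [y [H ->]]]; exists y.
      assert (Hy : y <> zero) by (eapply mul_neq0r; eauto).
      repeat split; auto.
Qed.

Lemma inE_inter X Y : inE mul zero X -> inE mul zero Y -> inE mul zero (inter X Y).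
Proof.
  intros [HX [wX HwX]] [HY [wY HwY]]; split.
  - intros x [Hx _]; auto.
  - exists (HComp wX wY); intros x z; simpl; split.
    + intros [y [Hy Hz]]; apply HwY in Hy as [-> Hy]; apply HwX in Hz as [-> Hz].
      split; [reflexivity | split; assumption].
    + intros [-> [Hx Hy]]; exists z; split; [apply HwY | apply HwX]; split; auto.
Qed.

Lemma inE_empty : inE mul zero (@emptyset S).
Proof.
  split; [intros x [] |].
  exists (HGen zero); intros x z; simpl; unfold theta, idmap, emptyset.
  rewrite mul0s; tauto.
Qed.

Lemma principal_zero x : ~ principal zero x.
Proof. intros [y [H _]]; apply H, mul0s. Qed.

Lemma principal_divides s t x : divides mul s t -> principal t x -> principal s x.
Proof.
  intros [-> | [e ->]] [y [H ->]]; [exists y; auto |].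
  exists (mul e y); rewrite mulA; auto.
Qed.

Lemma principal_lcm s t r x :
  is_lcm mul s t r -> inter (principal s) (principal t) x <-> principal r x.
Proof.
  intros [Hr _]; split.
  - intros [[a [Ha ->]] [b [Hb Eb]]].
    destruct (proj1 (Hr (mul s a))) as [c Ec]; [eauto |].
    exists c; rewrite <- Ec; auto.
  - intros [c [Hc ->]].
    destruct (proj2 (Hr (mul r c))) as [[a Ea] [b Eb]]; [eauto |].
    split; [exists a | exists b]; split; congruence.
Qed.

Lemma character_ext psi X Y :
  character mul zero psi -> inE mul zero X -> inE mul zero Y ->
  (forall x, X x <-> Y x) -> psi X -> psi Y.
Proof. intros [Hwd _] HX HY E; apply (Hwd X Y); auto. Qed.

Lemma character_mono psi X Y :
  character mul zero psi -> inE mul zero X -> inE mul zero Y ->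
  (forall x, X x -> Y x) -> psi X -> psi Y.
Proof.
  intros Hpsi HX HY Hsub HpX.
  assert (HXY : psi (inter X Y)).
  { apply (character_ext psi X); auto using inE_inter; firstorder. }
  destruct Hpsi as [_ [_ [_ Hmul]]].
  apply Hmul in HXY; tauto.
Qed.

Lemma character_nonempty psi X :
  character mul zero psi -> inE mul zero X -> psi X -> exists x, X x.
Proof.
  intros Hpsi HX HpX; apply NNPP; intros Hno.
  apply (proj1 (proj2 (proj2 Hpsi))).
  apply (character_ext psi X); auto using inE_empty.
  unfold emptyset; firstorder.
Qed.

Lemma open_string_factor sigma u m :
  open_string mul sigma -> sigma m -> divides mul u m ->
  exists k, sigma (mul u k) /\ divides mul m (mul u k).
Proof.
  intros Ho Hm Dum; destruct (proj1 (Ho m) Hm) as [p Hp].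
  destruct Dum as [-> | [e ->]]; [exists p | exists (mul e p); rewrite mulA];
    split; auto using divides_mulr.
Qed.

Lemma phi_sigma_principal sigma t :
  is_string mul zero sigma -> open_string mul sigma -> sigma t ->
  phi_sigma mul sigma (principal t).
Proof.
  intros [_ [Hz [_ Hcm]]] Ho Ht r Hr.
  destruct (Hcm r t Hr Ht) as [m [Hm [Drm Dtm]]].
  destruct (open_string_factor _ _ _ Ho Hm Dtm) as [k [Hk Dk]].
  exists (mul t k); split; [exact Hk | split].
  - exists k; split; [intros E; rewrite E in Hk; auto | reflexivity].
  - eapply divides_trans; eauto.
Qed.

Lemma phi_sigma_character sigma :
  is_string mul zero sigma -> open_string mul sigma ->
  character mul zero (phi_sigma mul sigma).
Proof.
  intros Hs Ho; pose proof Hs as [[s0 Hs0] [_ [_ Hcm]]].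
  split; [| split; [| split]].
  - unfold phi_sigma; firstorder.
  - exists (principal s0); split; auto using inE_principal, phi_sigma_principal.
  - intros P; destruct (P s0 Hs0) as [t [_ [[] _]]].
  - intros X Y HX HY; split.
    + intros P; split; intros r Hr; destruct (P r Hr) as [t [Ht [[HXt HYt] D]]]; eauto.
    + intros [PX PY] r Hr.
      destruct (PX r Hr) as [t1 [H1 [X1 D1]]].
      destruct (PY t1 H1) as [t2 [H2 [Y2 D2]]].
      destruct (PX t2 H2) as [t3 [H3 [X3 D3]]].
      exists t2; split; [exact H2 | split; [split |]].
      * apply (inE_convex X t1 t2 t3); auto.
      * exact Y2.
      * eapply divides_trans; eauto.
Qed.

Lemma string_of_character psi :
  character mul zero psi -> (exists r, psi (principal r)) ->
  is_string mul zero (fun r => psi (principal r)).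
Proof.
  intros Hpsi Hne; split; [exact Hne | split; [| split]].
  - intros H0; destruct (character_nonempty psi _ Hpsi (inE_principal zero) H0) as [x Hx].
    exact (principal_zero x Hx).
  - intros s t Ht Dst; apply (character_mono psi (principal t)); auto using inE_principal.
    intros x; apply principal_divides; exact Dst.
  - intros s t Hs Ht; destruct (lcm s t) as [r Hr]; exists r.
    split; [| apply Hr].
    pose proof Hpsi as [_ [_ [_ Hmul]]].
    apply (character_ext psi (inter (principal s) (principal t)));
      auto using inE_inter, inE_principal.
    + intros x; apply principal_lcm; exact Hr.
    + apply Hmul; auto using inE_principal.
Qed.

Lemma maximal_string_principal sigma psi :
  maximal_string mul zero sigma -> open_string mul sigma -> character mul zero psi ->
  (forall X, inE mul zero X -> phi_sigma mul sigma X -> psi X) ->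
  forall r, sigma r <-> psi (principal r).
Proof.
  intros [Hs Hmax] Ho Hpsi Hle.
  assert (Hsub : forall s, sigma s -> psi (principal s)).
  { intros s Hss; apply Hle; auto using inE_principal, phi_sigma_principal. }
  intros r; split; [apply Hsub |].
  apply (Hmax (fun r => psi (principal r))); [| exact Hsub].
  apply string_of_character; [exact Hpsi |].
  destruct Hs as [[s0 Hs0] _]; eauto.
Qed.

Lemma phi_sigma_of_character sigma psi X :
  is_string mul zero sigma -> open_string mul sigma -> character mul zero psi ->
  (forall r, sigma r <-> psi (principal r)) ->
  inE mul zero X -> psi X -> phi_sigma mul sigma X.
Proof.
  intros Hs Ho Hpsi Hprinc HX HpX s Hss.
  destruct (inE_nf X HX) as [u [D [HD [Hn HXD]]]].
  assert (Hk : exists k, sigma (tmul u k) /\ divides mul s (tmul u k)).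
  { destruct u as [u0 |]; [| exists s; split; [exact Hss | left; reflexivity]].
    assert (Hu0 : sigma u0).
    { apply Hprinc, (character_mono psi X); auto using inE_principal.
      intros x Hx; apply HXD in Hx as [y [Dy ->]].
      exists y; split; [apply (Hn y Dy) | reflexivity]. }
    destruct Hs as [_ [_ [_ Hcm]]].
    destruct (Hcm s u0 Hss Hu0) as [m [Hm [Dsm Dum]]].
    destruct (open_string_factor _ _ _ Ho Hm Dum) as [k [Hk Dk]].
    exists k; split; [exact Hk | eapply divides_trans; eauto]. }
  destruct Hk as [k [Hk Dk]].
  exists (tmul u k); split; [exact Hk | split; [| exact Dk]].
  assert (Hmeet : psi (inter X (principal (tmul u k)))).
  { pose proof Hpsi as [_ [_ [_ Hmul]]].
    apply Hmul; [exact HX | apply inE_principal | split; [exact HpX | apply Hprinc, Hk]]. }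
  destruct (character_nonempty psi _ Hpsi (inE_inter _ _ HX (inE_principal _)) Hmeet)
    as [x [Hx [w [Hw Ex]]]].
  apply HXD in Hx as [y [Dy Ey]].
  apply HXD; exists k; split; [| reflexivity].
  rewrite Ex, <- tmul_mulr in Ey; rewrite <- tmul_mulr in Hw.
  apply tmul_inj in Ey; [| exact Hw].
  apply (HD k w); rewrite Ey; exact Dy.
Qed.

End ZeroLeftCancellative.

Theorem theorem16p18 (S : Type) (mul : S -> S -> S) (zero : S)
  (Hassoc : forall a b c, mul a (mul b c) = mul (mul a b) c)
  (Hzl : forall a, mul zero a = zero)
  (Hzr : forall a, mul a zero = zero)
  (Hcanc : zero_left_cancellative mul zero)
  (Hlcm : admits_lcm mul)
  (sigma : S -> Prop)
  (Hmax : maximal_string mul zero sigma)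
  (Hopen : open_string mul sigma) :
  ultracharacter mul zero (phi_sigma mul sigma).
Proof.
  pose proof Hmax as [Hstr _].
  split; [eapply phi_sigma_character; eauto |].
  intros psi Hpsi Hle X HX; split; [apply Hle; exact HX |].
  assert (Hprinc : forall r, sigma r <-> psi (principal S mul zero r))
    by (eapply maximal_string_principal; eauto).
  eapply phi_sigma_of_character; eauto.
Qed.
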